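(* Let $R$ be a $\sigma$-(sps) Armendariz ring, where $\sigma$ is an endomorphism of $R$. Then: (1) $R$ is reversible if and only if $R[[x;\sigma]]$ is reversible; (2) $R$ is symmetric if and only if $R[[x;\sigma]]$ is symmetric.
   Context: All rings are associative with identity; $\sigma$ denotes a nonzero, non-identity ring endomorphism of $R$. The skew power series ring $R[[x;\sigma]]$ consists of all formal series $\sum_{i=0}^\infty a_i x^i$ with $a_i\in R$, added termwise and multiplied using distributivity and the rule $xa=\sigma(a)x$ for $a\in R$. A ring $R$ is $\sigma$-(sps) Armendariz if whenever $p=\sum_{i=0}^\infty a_ix^i$ and $q=\sum_{j=0}^\infty b_jx^j$ in $R[[x;\sigma]]$ satisfy $pq=0$, then $a_ib_j=0$ for all $i,j$. A ring $S$ is reversible if $ab=0$ implies $ba=0$ for all $a,b\in S$; $S$ is symmetric if $abc=0$ implies $acb=0$ for all $a,b,c\in S$. *)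

From HB Require Import structures.
From mathcomp Require Import all_boot all_order all_algebra.
Set Implicit Arguments. Unset Strict Implicit. Unset Printing Implicit Defensive.
Import GRing.Theory.
Local Open Scope ring_scope.

(* Skew power series ring R[[x;sigma]]: a series
   sum_i a_i x^i is represented by its coefficient function nat -> R.
   Multiplication follows x a = sigma(a) x, i.e.
   (a x^i)(b x^j) = a sigma^i(b) x^(i+j), hence
   (p q)_n = sum_{i+j=n} p_i sigma^i(q_j). *)

Definition sps (R : nzRingType) := nat -> R.

Definition sps_mul (R : nzRingType) (sigma : {rmorphism R -> R})
  (p q : sps R) : sps R :=
  fun n => \sum_(i < n.+1) p i * iter i sigma (q (n - i)%N).

Definition sps_is_zero (R : nzRingType) (p : sps R) : Prop :=
  forall n, p n = 0.

Definition sps_armendariz (R : nzRingType) (sigma : {rmorphism R -> R}) : Prop :=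
  forall p q : sps R, sps_is_zero (sps_mul sigma p q) ->
    forall i j : nat, p i * q j = 0.

Definition reversible (R : nzRingType) : Prop :=
  forall a b : R, a * b = 0 -> b * a = 0.

Definition symmetric_ring (R : nzRingType) : Prop :=
  forall a b c : R, a * b * c = 0 -> a * c * b = 0.

Definition sps_reversible (R : nzRingType) (sigma : {rmorphism R -> R}) : Prop :=
  forall p q : sps R, sps_is_zero (sps_mul sigma p q) ->
    sps_is_zero (sps_mul sigma q p).

Definition sps_symmetric (R : nzRingType) (sigma : {rmorphism R -> R}) : Prop :=
  forall p q r : sps R,
    sps_is_zero (sps_mul sigma (sps_mul sigma p q) r) ->
    sps_is_zero (sps_mul sigma (sps_mul sigma p r) q).

From HB Require Import structures.
From mathcomp Require Import all_boot all_order all_algebra.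
Set Implicit Arguments. Unset Strict Implicit. Unset Printing Implicit Defensive.
Local Open Scope ring_scope.
Import GRing.Theory.

(* The key consequence of the Armendariz condition is that annihilation is
   stable under sigma on the right: if a b = 0 then a sigma^n(b) = 0 for all
   n (test the product (a - a x)(sum_n sigma^n(b) x^n), which vanishes).
   Consequently, a coefficientwise annihilation p_i q_j = 0 already forces
   the skew product p q to vanish.
   - If R is reversible and p q = 0, Armendariz gives p_i q_j = 0, hence
     q_j p_i = 0, hence q p = 0.
   - If R is symmetric (so reversible) and (p q) r = 0, two applications of
     Armendariz and reversibility give p_i q_j r_l = 0, hence p_i r_l q_j = 0;
     sigma-stability turns this into the vanishing of every term of (p r) q.
   The converse implications test the definitions on constant series, using
   that multiplying by a constant series acts coefficientwise. *)

Section SkewPowerSeries.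
Variable R : nzRingType.
Variable sigma : {rmorphism R -> R}.

Local Notation "p ** q" := (sps_mul sigma p q) (at level 40, left associativity).

Definition sps_const (a : R) : sps R := fun n => if n is 0%N then a else 0.

Lemma sps_mul_constl (a : R) (q : sps R) n : (sps_const a ** q) n = a * q n.
Proof.
rewrite /sps_mul big_ord_recl subn0 big1 ?addr0 // => i _.
by rewrite mul0r.
Qed.

Lemma iter_rmorph0 n : iter n sigma 0 = 0.
Proof. by elim: n => [|n IH] //=; rewrite IH rmorph0. Qed.

Lemma iter_rmorphM n (b c : R) :
  iter n sigma (b * c) = iter n sigma b * iter n sigma c.
Proof. by elim: n => [|n IH] //=; rewrite IH rmorphM. Qed.

Lemma sps_mul_constr (p : sps R) (c : R) n :
  (p ** sps_const c) n = p n * iter n sigma c.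
Proof.
rewrite /sps_mul big_ord_recr /= subnn big1 ?add0r // => i _.
have := ltn_ord i; rewrite -subn_gt0; case: (n - i)%N => // k _.
by rewrite iter_rmorph0 mulr0.
Qed.

Lemma sps_mul_scalel (c : R) (p q : sps R) n :
  ((fun i => c * p i) ** q) n = c * (p ** q) n.
Proof.
by rewrite /sps_mul mulr_sumr; apply: eq_bigr => i _; rewrite mulrA.
Qed.

Lemma sps_mul_eq0 (p q : sps R) :
  (forall i j, p i * iter i sigma (q j) = 0) -> sps_is_zero (p ** q).
Proof. by move=> pq0 n; rewrite /sps_mul big1. Qed.

Hypothesis HA : sps_armendariz sigma.

Lemma armendariz_annihilator_iter (a b : R) n :
  a * b = 0 -> a * iter n sigma b = 0.
Proof.
move=> ab0.
pose p : sps R := fun i => if i is 0%N then a else if i is 1%N then - a else 0.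
pose q : sps R := fun i => iter i sigma b.
suff pq0 : sps_is_zero (p ** q) by exact: HA pq0 0%N n.
case=> [|m]; rewrite /sps_mul.
  by rewrite big_ord_recl big_ord0 addr0.
rewrite big_ord_recl big_ord_recl big1 => [|i _]; last by rewrite mul0r.
by rewrite /= subn1 mulNr addr0 addrN.
Qed.

Lemma armendariz_triple_iter (a b c : R) i m :
  a * b * c = 0 -> (i <= m)%N -> a * iter i sigma b * iter m sigma c = 0.
Proof.
move=> abc0 im.
have abci : a * iter i sigma (b * c) = 0.
  by apply: armendariz_annihilator_iter; rewrite mulrA.
rewrite iter_rmorphM mulrA in abci.
by rewrite -(subnK im) iterD; apply: armendariz_annihilator_iter.
Qed.

Hypothesis Hrev : reversible R.

Lemma reversible_sps_reversible : sps_reversible sigma.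
Proof.
move=> p q pq0; apply: sps_mul_eq0 => i j.
by apply: armendariz_annihilator_iter; apply: Hrev; apply: HA pq0 _ _.
Qed.

Lemma coef_triple_zero (p q r : sps R) :
  sps_is_zero ((p ** q) ** r) -> forall i j l, p i * q j * r l = 0.
Proof.
move=> pqr0 i j l.
have rpq0 : sps_is_zero ((fun k => r l * p k) ** q).
  by move=> n; rewrite sps_mul_scalel; apply: Hrev; apply: HA pqr0 _ _.
by apply: Hrev; rewrite mulrA; apply: HA rpq0 _ _.
Qed.

End SkewPowerSeries.

(* Symmetric rings are reversible (take a = 1). *)
Lemma symmetric_reversible (R : nzRingType) :
  symmetric_ring R -> reversible R.
Proof. by move=> Hsym a b ab0; have := Hsym 1 a b; rewrite !mul1r; apply. Qed.

Lemma symmetric_sps_symmetric (R : nzRingType) (sigma : {rmorphism R -> R}) :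
  sps_armendariz sigma -> symmetric_ring R -> sps_symmetric sigma.
Proof.
move=> HA Hsym p q r pqr0.
have prq0 i j l : p i * r l * q j = 0.
  by apply: (Hsym); exact: (coef_triple_zero HA (symmetric_reversible Hsym) pqr0).
apply: sps_mul_eq0 => k j; rewrite /sps_mul mulr_suml big1 // => i _.
by apply: armendariz_triple_iter; rewrite // -ltnS.
Qed.

Lemma sps_reversible_reversible (R : nzRingType) (sigma : {rmorphism R -> R}) :
  sps_reversible sigma -> reversible R.
Proof.
move=> Hrev a b ab0.
have ab0' : sps_is_zero (sps_mul sigma (sps_const a) (sps_const b)).
  by case=> [|n]; rewrite sps_mul_constl ?mulr0.
by have := Hrev _ _ ab0' 0%N; rewrite sps_mul_constl.
Qed.

Lemma sps_symmetric_symmetric (R : nzRingType) (sigma : {rmorphism R -> R}) :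
  sps_symmetric sigma -> symmetric_ring R.
Proof.
move=> Hsym a b c abc0.
have abc0' : sps_is_zero
    (sps_mul sigma (sps_mul sigma (sps_const a) (sps_const b)) (sps_const c)).
  by case=> [|n]; rewrite sps_mul_constr sps_mul_constl ?mulr0 ?mul0r.
by have := Hsym _ _ _ abc0' 0%N; rewrite sps_mul_constr sps_mul_constl.
Qed.

Theorem proposition2p5 (R : nzRingType) (sigma : {rmorphism R -> R})
  (Hnz : exists a : R, sigma a != 0) (Hnid : exists a : R, sigma a != a)
  (HA : sps_armendariz sigma) :
  (reversible R <-> sps_reversible sigma) /\
  (symmetric_ring R <-> sps_symmetric sigma).
Proof.
split; split.
- exact: reversible_sps_reversible.
- exact: sps_reversible_reversible.
- exact: symmetric_sps_symmetric.
- exact: sps_symmetric_symmetric.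
Qed.
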